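(* Let $\mathcal{D}$ be a liability category, let $N=(G,X,\lambda,\iota;\delta,\hat\alpha)$ be a liability network in $\mathcal{D}$ with $G=(V,E,s,t)$, and let $\mathcal{L}$ be its liability sheaf on $\mathcal{H}_G$. Set $P=\prod_{v\in V}X_v$ and $B=\prod_{e\in E}X_{s(e)}^{\lambda_e}$, and define $D:P\to B$ and $A:B\to P$ componentwise by $D_e=\delta_e\circ\pi_{s(e)}$ (i.e. $D(\mathbf{x})_e=\delta_e(x_{s(e)})$) and $A_v=\alpha_v\circ\langle\pi_e\rangle_{t(e)=v}$ (i.e. $A(\mathbf{p})_v=\alpha_v((p_e)_{t(e)=v})$), and let $\Phi=A\circ D:P\to P$. Then there is a canonical isomorphism in $\mathcal{D}$ \[ \lim_{\mathcal{I}(\mathcal{H}_G)}\mathcal{L}\ \cong\ \mathrm{Eq}(\mathrm{id}_P,\Phi). \]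
   Context: A liability category is a category $\mathcal{D}$ such that: (1) $\mathcal{D}$ has a terminal object $1$, all finite products, and equalizers; (2) for each object $P$ the set $\mathrm{Hom}(1,P)$ carries a partial order, and for each $f:P\to Q$ the map $\rho\mapsto f\circ\rho$ is order-preserving; (3) for each $P$ a distinguished pullback-stable class $\mathcal{S}_P$ of monomorphisms into $P$ (constraint subobjects); (4) for each $P$ a bound selector $\beta_P:\mathrm{Hom}(1,P)\to\mathcal{S}_P$; (5) for finite families, $\mathrm{Hom}(1,\prod_iP_i)\to\prod_i\mathrm{Hom}(1,P_i)$ is an order isomorphism for the componentwise order. A liability network in $\mathcal{D}$ is $N=(G,X,\lambda,\iota;\delta,\hat\alpha)$ with $G=(V,E,s,t)$ a finite directed graph, payment objects $X_v$, liability morphisms $\lambda_e:1\to X_{s(e)}$, exogenous resources $\iota_v:1\to X_v$, distributors $\delta_e:X_{s(e)}\to X_{s(e)}^{\lambda_e}$ where $X_{s(e)}^{\lambda_e}$ is the domain of $\beta_{X_{s(e)}}(\lambda_e)$, and aggregators $\hat\alpha_v:X_v\times\prod_{t(e)=v}X_{s(e)}^{\lambda_e}\to X_v$; the partial aggregator is $\alpha_v=\hat\alpha_v\circ(\iota_v\times\mathrm{id}):\prod_{t(e)=v}X_{s(e)}^{\lambda_e}\to X_v$, empty products being $1$. The liability hypergraph $\mathcal{H}_G$ has vertices $V\sqcup\{e^*:e\in E\}$ and hyperedges $h_v^\delta$ (source $\{v\}$, target $\{e^*:s(e)=v\}$) and $h_v^\alpha$ (empty source, target $\{e^*:t(e)=v\}\cup\{v\}$).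 Its incidence category $\mathcal{I}(\mathcal{H}_G)$ has objects the vertices and hyperedges and exactly one non-identity morphism $h\to w$ for each incidence of vertex $w$ in the source or target of hyperedge $h$ (no other composites). The liability sheaf $\mathcal{L}:\mathcal{I}(\mathcal{H}_G)\to\mathcal{D}$ has $\mathcal{L}(v)=X_v$, $\mathcal{L}(e^* )=X_{s(e)}^{\lambda_e}$, $\mathcal{L}(h_v^\delta)=X_v$, $\mathcal{L}(h_v^\alpha)=\prod_{t(e)=v}X_{s(e)}^{\lambda_e}$, with $\mathcal{L}(h_v^\delta\to v)=\mathrm{id}$, $\mathcal{L}(h_v^\delta\to e^* )=\delta_e$, $\mathcal{L}(h_v^\alpha\to e^* )=\pi_e$, $\mathcal{L}(h_v^\alpha\to v)=\alpha_v$. $\mathrm{Eq}(f,g)$ denotes the equalizer of a parallel pair. *)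

From mathcomp Require Import all_boot.

Set Implicit Arguments.
Unset Strict Implicit.
Unset Printing Implicit Defensive.

Record Category := Cat {
  ob :> Type;
  hom : ob -> ob -> Type;
  idc : forall A, hom A A;
  cmp : forall A B C, hom B C -> hom A B -> hom A C;
  cmp_idl : forall A B (f : hom A B), cmp (idc B) f = f;
  cmp_idr : forall A B (f : hom A B), cmp f (idc A) = f;
  cmp_assoc : forall A B C D (h : hom C D) (g : hom B C) (f : hom A B),
      cmp h (cmp g f) = cmp (cmp h g) f }.
Arguments hom {c} _ _.
Arguments idc {c} A.
Arguments cmp {c A B C} _ _.

Section CatDefs.
Variable C : Category.

Definition IsMono (Q P : C) (m : hom Q P) : Prop :=
  forall (Z : C) (a b : hom Z Q), cmp m a = cmp m b -> a = b.

Definition IsPullback (Q P P' Q' : C) (m : hom Q P) (f : hom P' P)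
    (m' : hom Q' P') (g : hom Q' Q) : Prop :=
  cmp m g = cmp f m' /\
  forall (Z : C) (a : hom Z P') (b : hom Z Q), cmp f a = cmp m b ->
    exists u : hom Z Q', (cmp m' u = a /\ cmp g u = b) /\
      forall u' : hom Z Q', cmp m' u' = a -> cmp g u' = b -> u' = u.

Definition Isomorphic_via (A B : C) (f : hom A B) : Prop :=
  exists g : hom B A, cmp g f = idc A /\ cmp f g = idc B.

End CatDefs.

Record FinLimCategory := FinLimCat {
  flc :> Category;
  term : flc;
  to_term : forall X : flc, hom X term;
  to_term_uniq : forall (X : flc) (f : hom X term), f = to_term X;
  bprod : flc -> flc -> flc;
  bp1 : forall A B, hom (bprod A B) A;
  bp2 : forall A B, hom (bprod A B) B;
  bpair : forall X A B, hom X A -> hom X B -> hom X (bprod A B);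
  bpair_1 : forall X A B (f : hom X A) (g : hom X B), cmp (bp1 A B) (bpair f g) = f;
  bpair_2 : forall X A B (f : hom X A) (g : hom X B), cmp (bp2 A B) (bpair f g) = g;
  bpair_uniq : forall X A B (u : hom X (bprod A B)),
      u = bpair (cmp (bp1 A B) u) (cmp (bp2 A B) u);
  fprod : forall I : finType, (I -> flc) -> flc;
  fproj : forall (I : finType) (F : I -> flc) (i : I), hom (fprod F) (F i);
  ftuple : forall (I : finType) (F : I -> flc) (X : flc),
      (forall i, hom X (F i)) -> hom X (fprod F);
  ftuple_proj : forall (I : finType) (F : I -> flc) X (f : forall i, hom X (F i)) i,
      cmp (fproj F i) (ftuple f) = f i;
  ftuple_uniq : forall (I : finType) (F : I -> flc) X (u : hom X (fprod F)),
      u = ftuple (fun i => cmp (fproj F i) u);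
  eqz : forall A B : flc, hom A B -> hom A B -> flc;
  eqz_map : forall A B (f g : hom A B), hom (eqz f g) A;
  eqz_eq : forall A B (f g : hom A B), cmp f (eqz_map f g) = cmp g (eqz_map f g);
  eqz_lift : forall A B (f g : hom A B) X (h : hom X A), cmp f h = cmp g h ->
      hom X (eqz f g);
  eqz_lift_comm : forall A B (f g : hom A B) X (h : hom X A) (H : cmp f h = cmp g h),
      cmp (eqz_map f g) (eqz_lift H) = h;
  eqz_uniq : forall A B (f g : hom A B) X (u v : hom X (eqz f g)),
      cmp (eqz_map f g) u = cmp (eqz_map f g) v -> u = v }.
Arguments term {_}.
Arguments bp1 {_} A B.
Arguments bp2 {_} A B.
Arguments bpair {_ X A B} _ _.
Arguments fprod {_ I} _.
Arguments fproj {_ I} F i.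
Arguments ftuple {_ I F X} _.
Arguments eqz {_ A B} _ _.
Arguments eqz_map {_ A B} _ _.

Record LiabilityCategory := LiabCat {
  lcat :> FinLimCategory;
  pt_le : forall P : lcat, hom term P -> hom term P -> Prop;
  pt_le_refl : forall P (x : hom term P), pt_le x x;
  pt_le_antisym : forall P (x y : hom term P), pt_le x y -> pt_le y x -> x = y;
  pt_le_trans : forall P (x y z : hom term P), pt_le x y -> pt_le y z -> pt_le x z;
  pt_le_post : forall (P Q : lcat) (f : hom P Q) (x y : hom term P),
      pt_le x y -> pt_le (cmp f x) (cmp f y);
  cstr : forall P Q : lcat, hom Q P -> Prop;
  cstr_mono : forall (P Q : lcat) (m : hom Q P), cstr m -> IsMono m;
  cstr_pb : forall (P Q P' Q' : lcat) (m : hom Q P) (f : hom P' P)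
      (m' : hom Q' P') (g : hom Q' Q), cstr m -> IsPullback m f m' g -> cstr m';
  bound : forall P : lcat, hom term P -> {Q : lcat & {m : hom Q P | cstr m}};
  (* (5) Hom(1, prod_i P_i) -> prod_i Hom(1,P_i) is an order isomorphism
     (bijectivity is the universal property of the product) *)
  pt_le_prod : forall (I : finType) (F : I -> lcat) (x y : hom term (fprod F)),
      pt_le x y <-> (forall i, pt_le (cmp (fproj F i) x) (cmp (fproj F i) y)) }.
Arguments cstr {_ P Q} _.
Arguments bound {_ P} _.

Record Graph := MkGraph {
  gV : finType;
  gE : finType;
  gs : gE -> gV;
  gt : gE -> gV }.

Definition InE (G : Graph) (v : gV G) : finType := {e : gE G | gt e == v}.

Record LiabilityNetwork (D : LiabilityCategory) (G : Graph) := MkNet {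
  nX : gV G -> D;
  nlam : forall e : gE G, hom term (nX (gs e));
  niota : forall v : gV G, hom term (nX v);
  (* domain X_{s(e)}^{lambda_e} of beta(lambda_e) *)
  ndelta : forall e : gE G, hom (nX (gs e)) (projT1 (bound (nlam e)));
  nahat : forall v : gV G,
      hom (bprod (nX v) (fprod (fun e : InE v => projT1 (bound (nlam (val e))))))
          (nX v) }.
Arguments nX {D G} _ _.
Arguments nlam {D G} _ _.
Arguments niota {D G} _ _.
Arguments ndelta {D G} _ _.
Arguments nahat {D G} _ _.

Section Network.
Variables (D : LiabilityCategory) (G : Graph) (N : LiabilityNetwork D G).

Definition Xlam (e : gE G) : D := projT1 (bound (nlam N e)).

Definition inProd (v : gV G) : D := fprod (fun e : InE v => Xlam (val e)).

(* partial aggregator alpha_v = ahat_v o (iota_v x id), precomposed with 1 x Q ~ Q *)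
Definition alpha (v : gV G) : hom (inProd v) (nX N v) :=
  cmp (nahat N v) (bpair (cmp (niota N v) (to_term (inProd v))) (idc (inProd v))).

Definition Pobj : D := fprod (fun v : gV G => nX N v).
Definition Bobj : D := fprod (fun e : gE G => Xlam e).

Definition Dmap : hom Pobj Bobj :=
  ftuple (fun e : gE G => cmp (ndelta N e) (fproj (fun v => nX N v) (gs e))).

Definition Amap : hom Bobj Pobj :=
  ftuple (fun v : gV G =>
    cmp (alpha v) (ftuple (fun e : InE v => fproj (fun e' : gE G => Xlam e') (val e)))).

Definition Phi : hom Pobj Pobj := cmp Amap Dmap.

End Network.

(* The incidence category I(H) has objects the vertices and hyperedges *)
(* and one non-identity arrow h -> w per incidence of w in h, and no    *)
(* nontrivial composites; a functor I(H) -> C is therefore exactly the  *)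
(* data below, and a cone over it is a family of legs commuting with    *)
(* each incidence arrow.                                               *)
Record Hypergraph := MkHypergraph {
  hV : Type;
  hE : Type;
  hInc : hE -> hV -> Type }.

Record IncDiagram (C : Category) (H : Hypergraph) := MkIncDiagram {
  dV : hV H -> C;
  dE : hE H -> C;
  dRes : forall h w, hInc h w -> hom (dE h) (dV w) }.
Arguments dV {C H} _ _.
Arguments dE {C H} _ _.
Arguments dRes {C H} _ {h w} _.

Record Cone (C : Category) (H : Hypergraph) (F : IncDiagram C H) := MkCone {
  apex : C;
  legV : forall w, hom apex (dV F w);
  legE : forall h, hom apex (dE F h);
  leg_comm : forall h w (i : hInc h w), cmp (dRes F i) (legE h) = legV w }.
Arguments apex {C H F} _.
Arguments legV {C H F} _ _.
Arguments legE {C H F} _ _.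

Definition IsLimitCone (C : Category) (H : Hypergraph) (F : IncDiagram C H)
    (c : Cone F) : Prop :=
  forall c' : Cone F,
    exists u : hom (apex c') (apex c),
      ((forall w, cmp (legV c w) u = legV c' w) /\
       (forall h, cmp (legE c h) u = legE c' h)) /\
      forall u' : hom (apex c') (apex c),
        (forall w, cmp (legV c w) u' = legV c' w) ->
        (forall h, cmp (legE c h) u' = legE c' h) -> u' = u.

Inductive LVert (G : Graph) : Type :=
  | VV of gV G
  | VE of gE G.
Inductive LHedge (G : Graph) : Type :=
  | HD of gV G
  | HA of gV G.
Arguments VV {G} _.
Arguments VE {G} _.
Arguments HD {G} _.
Arguments HA {G} _.

(* incidences:  h_v^delta : source {v}, target {e^* : s(e) = v};
                h_v^alpha : empty source, target {e^* : t(e) = v} u {v} *)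
Inductive LInc (G : Graph) : LHedge G -> LVert G -> Type :=
  | inc_delta_src (v : gV G) : LInc (HD v) (VV v)
  | inc_delta_tgt (e : gE G) : LInc (HD (gs e)) (VE e)
  | inc_alpha_tgt_e (e : gE G) : LInc (HA (gt e)) (VE e)
  | inc_alpha_tgt_v (v : gV G) : LInc (HA v) (VV v).

Definition liabHypergraph (G : Graph) : Hypergraph :=
  MkHypergraph (@LInc G).

Section Sheaf.
Variables (D : LiabilityCategory) (G : Graph) (N : LiabilityNetwork D G).

Definition LsV (w : LVert G) : D :=
  match w with VV v => nX N v | VE e => Xlam N e end.
Definition LsE (h : LHedge G) : D :=
  match h with HD v => nX N v | HA v => inProd N v end.

Definition LsRes (h : LHedge G) (w : LVert G) (i : LInc h w) : hom (LsE h) (LsV w) :=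
  match i in LInc h w return hom (LsE h) (LsV w) with
  | inc_delta_src v => idc (nX N v)
  | inc_delta_tgt e => ndelta N e
  | inc_alpha_tgt_e e =>
      fproj (fun e' : InE (gt e) => Xlam N (val e')) (exist _ e (eqxx (gt e)))
  | inc_alpha_tgt_v v => alpha N v
  end.

Definition liabilitySheaf : IncDiagram D (liabHypergraph G) :=
  @MkIncDiagram D (liabHypergraph G) LsV LsE LsRes.

End Sheaf.

From Pilot Require Import Defs.
From mathcomp Require Import all_boot.
From Stdlib Require Import FunctionalExtensionality.

Set Implicit Arguments.
Unset Strict Implicit.
Unset Printing Implicit Defensive.

(* A cone over the liability sheaf with apex Y is determined by its legs at
   the vertices v, i.e. by a single x : Y -> P.  The hyperedges h_v^delta force
   the legs at the e^* to be the components of D x, and the hyperedges h_v^alpha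
   then force the leg at v to be alpha_v of the incoming components, i.e.
   Phi x = x.  Conversely every x with Phi x = x spreads out to a cone.  So the
   equalizer of id and Phi, with its inclusion into P, is a limit cone, and any
   other limit is isomorphic to it by the uniqueness of limits. *)

Section FinLimFacts.
Variable C : FinLimCategory.

(* [Defs.fprod] is qualified because finfun's [fprod] shadows it. *)
Lemma fprod_hom_ext (I : finType) (F : I -> C) (X : C) (u v : hom X (Defs.fprod F)) :
  (forall i, cmp (fproj F i) u = cmp (fproj F i) v) -> u = v.
Proof.
move=> eq_uv; rewrite (ftuple_uniq u) (ftuple_uniq v); f_equal.
exact: functional_extensionality_dep.
Qed.

Lemma ftuple_cmp (I : finType) (F : I -> C) (X Y : C)
    (f : forall i, hom X (F i)) (g : hom Y X) :
  cmp (ftuple f) g = ftuple (fun i => cmp (f i) g).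
Proof. by apply: fprod_hom_ext => i; rewrite ftuple_proj cmp_assoc ftuple_proj. Qed.

Lemma eqz_map_id_fixed (A : C) (f : hom A A) :
  cmp f (eqz_map (idc A) f) = eqz_map (idc A) f.
Proof. by rewrite -eqz_eq cmp_idl. Qed.

End FinLimFacts.

Section LimitUniqueness.
Variables (C : Category) (H : Hypergraph) (F : IncDiagram C H).

Lemma limit_cone_endo_id (c : Cone F) (u : hom (apex c) (apex c)) :
  IsLimitCone c ->
  (forall w, cmp (legV c w) u = legV c w) ->
  (forall h, cmp (legE c h) u = legE c h) -> u = idc (apex c).
Proof.
move=> lim_c uV uE; have [u0 [_ uniq_u0]] := lim_c c.
by rewrite (uniq_u0 u) // (uniq_u0 (idc _)) // => *; exact: cmp_idr.
Qed.

Lemma limit_cone_iso (c L : Cone F) :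
  IsLimitCone c -> IsLimitCone L ->
  exists f : hom (apex c) (apex L),
    Isomorphic_via f /\ forall w, cmp (legV L w) f = legV c w.
Proof.
move=> lim_c lim_L.
have [f [[fV fE] _]] := lim_L c.
have [g [[gV gE] _]] := lim_c L.
exists f; split=> //; exists g.
by split; apply: limit_cone_endo_id => // w; rewrite cmp_assoc ?gV ?fV ?gE ?fE.
Qed.

End LimitUniqueness.

Section LiabilityCones.
Variables (D : LiabilityCategory) (G : Graph) (N : LiabilityNetwork D G).

Local Notation PF := (fun v : gV G => nX N v).
Local Notation BF := (fun e : gE G => Xlam N e).

Definition inDmap (Y : D) (x : hom Y (Pobj N)) (v : gV G) : hom Y (inProd N v) :=
  ftuple (fun e : InE v => cmp (fproj BF (val e)) (cmp (Dmap N) x)).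

Lemma Dmap_proj e : cmp (fproj BF e) (Dmap N) = cmp (ndelta N e) (fproj PF (gs e)).
Proof. exact: ftuple_proj. Qed.

Lemma Phi_proj (Y : D) (x : hom Y (Pobj N)) v :
  cmp (fproj PF v) (cmp (Phi N) x) = cmp (alpha N v) (inDmap x v).
Proof.
by rewrite /Phi -cmp_assoc (cmp_assoc (fproj PF v)) ftuple_proj -cmp_assoc ftuple_cmp.
Qed.

Definition sheafLegV (Y : D) (x : hom Y (Pobj N)) (w : LVert G) : hom Y (LsV N w) :=
  match w with
  | VV v => cmp (fproj PF v) x
  | VE e => cmp (fproj BF e) (cmp (Dmap N) x)
  end.

Definition sheafLegE (Y : D) (x : hom Y (Pobj N)) (h : LHedge G) : hom Y (LsE N h) :=
  match h with
  | HD v => cmp (fproj PF v) x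
  | HA v => inDmap x v
  end.

Lemma sheafLeg_comm (Y : D) (x : hom Y (Pobj N)) (x_fixed : cmp (Phi N) x = x)
    h w (i : LInc h w) :
  cmp (dRes (liabilitySheaf N) i) (sheafLegE x h) = sheafLegV x w.
Proof.
case: i => /= [v|e|e|v].
- exact: cmp_idl.
- by rewrite cmp_assoc -Dmap_proj -cmp_assoc.
- exact: (ftuple_proj _ (exist _ e (eqxx (gt e)))).
- by rewrite -Phi_proj x_fixed.
Qed.

Definition fixpointCone (Y : D) (x : hom Y (Pobj N)) (x_fixed : cmp (Phi N) x = x) :
    Cone (liabilitySheaf N) :=
  @MkCone _ _ (liabilitySheaf N) Y (sheafLegV x) (sheafLegE x) (sheafLeg_comm x_fixed).

Lemma sheafLegV_cmp (Y Z : D) (x : hom Y (Pobj N)) (u : hom Z Y) w :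
  cmp (sheafLegV x w) u = sheafLegV (cmp x u) w.
Proof. by case: w => [v|e] /=; rewrite -!cmp_assoc. Qed.

Lemma sheafLegE_cmp (Y Z : D) (x : hom Y (Pobj N)) (u : hom Z Y) h :
  cmp (sheafLegE x h) u = sheafLegE (cmp x u) h.
Proof.
case: h => [v|v] /=; first by rewrite -cmp_assoc.
by apply: fprod_hom_ext => e; rewrite cmp_assoc !ftuple_proj -!cmp_assoc.
Qed.

Definition coneTuple (c : Cone (liabilitySheaf N)) : hom (apex c) (Pobj N) :=
  ftuple (fun v => legV c (VV v)).

Section ConeLegs.
Variable c : Cone (liabilitySheaf N).

Lemma cone_legE_HD v : legE c (HD v) = legV c (VV v).
Proof. by rewrite -(leg_comm c (inc_delta_src v)) /= cmp_idl. Qed.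

Lemma cone_legV w : legV c w = sheafLegV (coneTuple c) w.
Proof.
case: w => [v|e] /=; first by rewrite ftuple_proj.
rewrite -(leg_comm c (inc_delta_tgt e)) /= cone_legE_HD.
by rewrite (cmp_assoc _ (Dmap N)) Dmap_proj -cmp_assoc ftuple_proj.
Qed.

Lemma cone_legE_HA_proj v (e : InE v) :
  cmp (fproj (fun e' : InE v => Xlam N (val e')) e) (legE c (HA v)) = legV c (VE (val e)).
Proof.
case: e => e tv /=; have tv_eq := eqP tv; subst v.
by rewrite (eq_irrelevance tv (eqxx _)); exact: (leg_comm c (inc_alpha_tgt_e e)).
Qed.

Lemma cone_legE h : legE c h = sheafLegE (coneTuple c) h.
Proof.
case: h => [v|v] /=; first by rewrite cone_legE_HD cone_legV.
by apply: fprod_hom_ext => e; rewrite cone_legE_HA_proj ftuple_proj cone_legV.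
Qed.

Lemma coneTuple_fixed : cmp (Phi N) (coneTuple c) = coneTuple c.
Proof.
apply: fprod_hom_ext => v; rewrite Phi_proj ftuple_proj.
by rewrite -(leg_comm c (inc_alpha_tgt_v v)) cone_legE.
Qed.

End ConeLegs.

Definition eqzCone : Cone (liabilitySheaf N) :=
  fixpointCone (eqz_map_id_fixed (Phi N)).

Lemma eqzCone_limit : IsLimitCone eqzCone.
Proof.
move=> c.
have c_eqz : cmp (idc (Pobj N)) (coneTuple c) = cmp (Phi N) (coneTuple c).
  by rewrite cmp_idl coneTuple_fixed.
have lift_comm := eqz_lift_comm c_eqz.
exists (eqz_lift c_eqz); split.
  by split=> [w|h] /=; rewrite (sheafLegV_cmp, sheafLegE_cmp) lift_comm
     (cone_legV, cone_legE).
move=> u uV _; apply: eqz_uniq; rewrite lift_comm.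
by apply: fprod_hom_ext => v; rewrite ftuple_proj -(uV (VV v)) /= cmp_assoc.
Qed.

End LiabilityCones.

Theorem mainTheorem2 (D : LiabilityCategory) (G : Graph) (N : LiabilityNetwork D G) :
  (exists c : Cone (liabilitySheaf N), IsLimitCone c) /\
  forall c : Cone (liabilitySheaf N), IsLimitCone c ->
    exists f : hom (apex c) (eqz (idc (Pobj N)) (Phi N)),
      Isomorphic_via f /\
      cmp (eqz_map (idc (Pobj N)) (Phi N)) f
        = ftuple (fun v : gV G => legV c (VV v)).
Proof.
split; first by exists (eqzCone N); exact: eqzCone_limit.
move=> c lim_c.
have [f [iso_f f_legs]] := limit_cone_iso lim_c (@eqzCone_limit _ _ N).
exists f; split=> //.
apply: fprod_hom_ext => v.
by rewrite ftuple_proj -(f_legs (VV v)) /= cmp_assoc.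
Qed.
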